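(* Let $\dot\Sigma_0=\{\cap_{\mathrm{I}},\cap_{\mathrm{D}},\cdot_{\mathrm{D}},\smile\}\subseteq\dot\Sigma$, where $\cap_{\mathrm{I}}$, $\cap_{\mathrm{D}}$, $\cdot_{\mathrm{D}}$ denote the characters $(\_\cap\mathrm{I})$, $(\_\cap\mathrm{D})$, $(\_\cdot\mathrm{D})$ respectively. If $\dot\Sigma_0^*/{\dot\sim_{\mathrm{REL}_{\ge 5}}}$ is finite, then $\dot\Sigma^*/{\dot\sim_{\mathrm{REL}_{\ge 5}}}$ is finite.
   Context: Fix a non-empty finite set $V$ of variables. Consider terms over variables, binary $\cap$, binary $\cdot$, constants $\mathrm{I},\mathrm{D}$ and unary converse $\smile$, interpreted in a structure $M$ (a non-empty set $|M|$ with a binary relation $a^M\subseteq|M|^2$ for each $a\in V$) by $[\![a]\!]_M=a^M$, $\cap$ as intersection, $[\![\mathrm{I}]\!]_M=\{(x,y):x=y\}$, $[\![\mathrm{D}]\!]_M=\{(x,y):x\ne y\}$, $R\cdot S=\{(x,y):\exists z,(x,z)\in R\wedge(z,y)\in S\}$, $R^{\smile}=\{(x,y):(y,x)\in R\}$. $\mathrm{REL}_{\ge 5}$ is the class of structures with at least $5$ elements, and $t\sim_{\mathrm{REL}_{\ge5}}s$ iff $[\![t]\!]_M=[\![s]\!]_M$ for all $M\in\mathrm{REL}_{\ge5}$. $\dot\Sigma$ is the set of characters $(\_\cap t)$, $(t\cap\_)$, $(\_\cdot t)$, $(t\cdot\_)$ for all variable-free such terms $t$, together with the character $\smile$. For $w\in\dot\Sigma^*$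 and a term $t$, $w[t]$ is defined by $\varepsilon[t]=t$, $((\_\cap s)w')[t]=w'[t]\cap s$, $((s\cap\_)w')[t]=s\cap w'[t]$, $((\_\cdot s)w')[t]=w'[t]\cdot s$, $((s\cdot\_)w')[t]=s\cdot w'[t]$, $(\smile w')[t]=(w'[t])^{\smile}$. $w\ \dot\sim_{\mathrm{REL}_{\ge5}}\ w'$ iff $w[a]\sim_{\mathrm{REL}_{\ge 5}}w'[a]$ for any variable $a\in V$ (considered on $\dot\Sigma^*$ and on $\dot\Sigma_0^*$). *)

From Stdlib Require List.
From mathcomp Require Import all_boot.
Set Implicit Arguments. Unset Strict Implicit. Unset Printing Implicit Defensive.

Inductive term (X : Type) : Type :=
| tVar  : X -> term X
| tCap  : term X -> term X -> term X
| tComp : term X -> term X -> term X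
| tI    : term X
| tD    : term X
| tConv : term X -> term X.
Arguments tI {X}. Arguments tD {X}.

Definition cterm := term Empty_set.

Fixpoint cterm_embed (X : Type) (t : cterm) : term X :=
  match t with
  | tVar e => match e with end
  | tCap s u => tCap (cterm_embed X s) (cterm_embed X u)
  | tComp s u => tComp (cterm_embed X s) (cterm_embed X u)
  | tI => tI
  | tD => tD
  | tConv s => tConv (cterm_embed X s)
  end.

Fixpoint sem (X T : Type) (rel : X -> T -> T -> Prop) (t : term X) : T -> T -> Prop :=
  match t with
  | tVar a => rel a
  | tCap s u => fun x y => sem rel s x y /\ sem rel u x y
  | tComp s u => fun x y => exists z, sem rel s x z /\ sem rel u z y
  | tI => fun x y => x = y
  | tD => fun x y => x <> y
  | tConv s => fun x y => sem rel s y x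
  end.

Definition atleast5 (T : Type) : Prop :=
  exists f : nat -> T, forall i j, i < 5 -> j < 5 -> f i = f j -> i = j.

Definition equiv_REL5 (X : Type) (t s : term X) : Prop :=
  forall (T : Type) (rel : X -> T -> T -> Prop), atleast5 T ->
    forall x y, sem rel t x y <-> sem rel s x y.

Inductive dchar : Type :=
| cCapR  : cterm -> dchar
| cCapL  : cterm -> dchar
| cCompR : cterm -> dchar
| cCompL : cterm -> dchar
| cConv  : dchar.

Definition apply_char (X : Type) (c : dchar) (t : term X) : term X :=
  match c with
  | cCapR s => tCap t (cterm_embed X s)
  | cCapL s => tCap (cterm_embed X s) t
  | cCompR s => tComp t (cterm_embed X s)
  | cCompL s => tComp (cterm_embed X s) t
  | cConv => tConv t
  end.

Fixpoint plug (X : Type) (w : seq dchar) (t : term X) : term X :=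
  match w with
  | [::] => t
  | c :: w' => apply_char c (plug w' t)
  end.

Definition dequiv (V : Type) (w w' : seq dchar) : Prop :=
  forall a : V, equiv_REL5 (plug w (tVar a)) (plug w' (tVar a)).

Inductive dchar0 : Type := c0CapI | c0CapD | c0CompD | c0Conv.

Definition char0_embed (c : dchar0) : dchar :=
  match c with
  | c0CapI => cCapR tI
  | c0CapD => cCapR tD
  | c0CompD => cCompR tD
  | c0Conv => cConv
  end.

Definition word0_embed (w : seq dchar0) : seq dchar := map char0_embed w.

Definition finite_quotient (A : Type) (R : A -> A -> Prop) : Prop :=
  exists reps : seq A, forall w, exists2 r, List.In r reps & R w r.

From mathcomp Require Import all_boot.
From Stdlib Require Import Classical Setoid.
From Stdlib Require List.

(* In a structure with at least three elements a variable-free term denotes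
   one of the four relations 0, I, D and the full relation 1, the last being
   D . D because any two points can be avoided by a third one.  Hence every
   character of Sigma-dot acts on relations like a word over Sigma-dot_0:
   intersecting with 0, I, D or 1 is ∩I∩D, ∩I, ∩D or nothing; composing on the
   right with 0, I, D or 1 is ∩I∩D, nothing, ·D or ·D·D; composing on the left
   is the converse of composing on the right.  Translating words letter by
   letter therefore preserves their meaning, so Sigma-dot_0 representatives of
   the finitely many classes also represent every class of Sigma-dot^*. *)

(* A shape [(i, d)] records whether a constant relation contains the diagonal
   and whether it contains the off-diagonal pairs. *)
Definition shape_rel {T : Type} (p : bool * bool) (x y : T) : Prop :=
  match p with
  | (true, true) => True
  | (true, false) => x = y
  | (false, true) => x <> y
  | (false, false) => False
  end.

Definition shape_cap (p q : bool * bool) : bool * bool := (p.1 && q.1, p.2 && q.2).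

Definition shape_comp (p q : bool * bool) : bool * bool :=
  (p.1 && q.1 || p.2 && q.2, p.1 && q.2 || p.2 && q.1 || p.2 && q.2).

Fixpoint cterm_shape (t : cterm) : bool * bool :=
  match t with
  | tVar e => match e with end
  | tCap s u => shape_cap (cterm_shape s) (cterm_shape u)
  | tComp s u => shape_comp (cterm_shape s) (cterm_shape u)
  | tI => (true, false)
  | tD => (false, true)
  | tConv s => cterm_shape s
  end.

Definition cap_word (p : bool * bool) : seq dchar0 :=
  (if p.2 then [::] else [:: c0CapI]) ++ (if p.1 then [::] else [:: c0CapD]).

Definition comp_word (p : bool * bool) : seq dchar0 :=
  match p with
  | (true, true) => [:: c0CompD; c0CompD]
  | (true, false) => [::]
  | (false, true) => [:: c0CompD]
  | (false, false) => [:: c0CapI; c0CapD]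
  end.

Definition char_word0 (c : dchar) : seq dchar0 :=
  match c with
  | cCapR s | cCapL s => cap_word (cterm_shape s)
  | cCompR s => comp_word (cterm_shape s)
  | cCompL s => c0Conv :: comp_word (cterm_shape s) ++ [:: c0Conv]
  | cConv => [:: c0Conv]
  end.

Definition word0_of (w : seq dchar) : seq dchar0 := flatten (map char_word0 w).

Lemma atleast5_third_point {T : Type} :
  atleast5 T -> forall x y : T, exists z, z <> x /\ z <> y.
Proof.
move=> [f f_inj] x y.
have f_neq i j : i < 5 -> j < 5 -> i != j -> f i <> f j.
  by move=> ilt jlt /eqP ij /(f_inj _ _ ilt jlt).
have n01 : f 0 <> f 1 by apply: f_neq.
have n02 : f 0 <> f 2 by apply: f_neq.
have n12 : f 1 <> f 2 by apply: f_neq.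
case: (classic (f 0 = x \/ f 0 = y)) => [f0|]; last by exists (f 0); tauto.
case: (classic (f 1 = x \/ f 1 = y)) => [f1|]; last by exists (f 1); tauto.
case: (classic (f 2 = x \/ f 2 = y)) => [f2|]; last by exists (f 2); tauto.
by case: f0 f1 f2 => [] e0 [] e1 [] e2; congruence.
Qed.

Lemma shape_rel_sym (T : Type) p (x y : T) : shape_rel p y x <-> shape_rel p x y.
Proof. by case: p => [[] []] /=; split=> // ? ?; auto. Qed.

Lemma shape_relI (T : Type) p q (x y : T) :
  shape_rel p x y /\ shape_rel q x y <-> shape_rel (shape_cap p q) x y.
Proof. by case: p q => [[] []] [[] []] /=; tauto. Qed.

Lemma plug_cat (X : Type) (u v : seq dchar) (t : term X) :
  plug (u ++ v) t = plug u (plug v t).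
Proof. by elim: u => //= c u ->. Qed.

Lemma word0_embed_cat (u v : seq dchar0) :
  word0_embed (u ++ v) = word0_embed u ++ word0_embed v.
Proof. exact: map_cat. Qed.

Lemma sem_plug_congr (X T : Type) (rel : X -> T -> T -> Prop) (w : seq dchar) (t t' : term X) :
  (forall x y, sem rel t x y <-> sem rel t' x y) ->
  forall x y, sem rel (plug w t) x y <-> sem rel (plug w t') x y.
Proof.
move=> tt'; elim: w => //= c w IHw.
by case: c => [s|s|s|s|] x y /=; setoid_rewrite IHw.
Qed.

Section Semantics.

Variables (X T : Type) (rel : X -> T -> T -> Prop).
Hypothesis third_point : forall x y : T, exists z, z <> x /\ z <> y.

Lemma shape_rel_comp p q (x y : T) :
  (exists z, shape_rel p x z /\ shape_rel q z y) <-> shape_rel (shape_comp p q) x y.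
Proof.
have [w [wx wy]] := third_point x y.
split=> [[z []]|].
  by case: p q => [[] []] [[] []] //= *; subst; auto; congruence.
case: (classic (x = y)) => [<-|nxy];
by case: p q => [[] []] [[] []] //= *;
  solve [exists x; intuition | exists y; intuition | exists w; intuition].
Qed.

Lemma sem_cterm_embed (t : cterm) (x y : T) :
  sem rel (cterm_embed X t) x y <-> shape_rel (cterm_shape t) x y.
Proof.
elim: t x y => [[]|s IHs u IHu|s IHs u IHu| | |s IHs] x y //=.
- by rewrite IHs IHu shape_relI.
- by setoid_rewrite IHs; setoid_rewrite IHu; apply: shape_rel_comp.
- by rewrite IHs shape_rel_sym.
Qed.

Lemma sem_cap_word p (t : term X) (x y : T) :
  sem rel (plug (word0_embed (cap_word p)) t) x y <-> sem rel t x y /\ shape_rel p x y.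
Proof. by case: p => [[] []] /=; tauto. Qed.

Lemma sem_comp_word p (t : term X) (x y : T) :
  sem rel (plug (word0_embed (comp_word p)) t) x y <->
  exists z, sem rel t x z /\ shape_rel p z y.
Proof.
case: p => [[] []] /=.
- split=> [[z [[z' [tz' _]] _]]|[z [tz _]]]; first by exists z'.
  have [w [wz wy]] := third_point z y.
  by exists w; split=> //; exists z; split=> // zw; apply: wz.
- by split=> [txy|[z [txz <-]]]; first exists y.
- by [].
- by split=> [[[_ ?] ?]|[? []]].
Qed.

Lemma sem_char_word0 c (t : term X) (x y : T) :
  sem rel (apply_char c t) x y <-> sem rel (plug (word0_embed (char_word0 c)) t) x y.
Proof.
case: c => [s|s|s|s|] /=.
- by rewrite sem_cap_word sem_cterm_embed.
- by rewrite sem_cap_word sem_cterm_embed; tauto.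
- by rewrite sem_comp_word; setoid_rewrite sem_cterm_embed.
- rewrite word0_embed_cat plug_cat sem_comp_word /=.
  setoid_rewrite sem_cterm_embed.
  by split=> -[z [? ?]]; exists z; rewrite shape_rel_sym.
- by [].
Qed.

Lemma sem_word0_of w (t : term X) (x y : T) :
  sem rel (plug w t) x y <-> sem rel (plug (word0_embed (word0_of w)) t) x y.
Proof.
elim: w x y => [//|c w IHw] x y.
rewrite /word0_of /= -/(word0_of w) word0_embed_cat plug_cat sem_char_word0.
exact: sem_plug_congr.
Qed.

End Semantics.

Lemma finite_quotient_pullback {A B : Type} {R : A -> A -> Prop} {S : B -> B -> Prop}
    (f : A -> B) (g : B -> A) :
  (forall a b, S (f a) b -> R a (g b)) -> finite_quotient S -> finite_quotient R.
Proof.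
move=> SR [reps reps_cover]; exists (map g reps) => a.
have [b b_rep ab] := reps_cover (f a).
by exists (g b); [exact: List.in_map | exact: SR].
Qed.

Theorem lemma4p12 (V : finType) (HV : 0 < #|V|) :
  finite_quotient (fun w w' : seq dchar0 =>
                     dequiv V (word0_embed w) (word0_embed w')) ->
  finite_quotient (fun w w' : seq dchar => dequiv V w w').
Proof.
apply: (finite_quotient_pullback word0_of word0_embed) => w w' ww' a T rel T5 x y.
rewrite (sem_word0_of _ _ rel (atleast5_third_point T5)).
exact: ww'.
Qed.
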